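(* Let $\pi_+\in(0,1)$, $\pi_-=1-\pi_+$, and let $p_+,p_-$ be probability densities on a feature space $\mathcal{X}$. Define $$\widetilde{p}_+(\boldsymbol{x})=\frac{\pi_+}{\pi_-^2+\pi_+}p_+(\boldsymbol{x})+\frac{\pi_-^2}{\pi_-^2+\pi_+}p_-(\boldsymbol{x}),\qquad \widetilde{p}_-(\boldsymbol{x})=\frac{\pi_+^2}{\pi_+^2+\pi_-}p_+(\boldsymbol{x})+\frac{\pi_-}{\pi_+^2+\pi_-}p_-(\boldsymbol{x}).$$ Then $$p_+(\boldsymbol{x})=\frac{1}{\pi_+}\big(\widetilde{p}_+(\boldsymbol{x})-\pi_-\widetilde{p}_-(\boldsymbol{x})\big),\qquad p_-(\boldsymbol{x})=\frac{1}{\pi_-}\big(\widetilde{p}_-(\boldsymbol{x})-\pi_+\widetilde{p}_+(\boldsymbol{x})\big).$$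
   Context: Here $\pi_+,\pi_-$ are the positive/negative class priors and $p_+,p_-$ the class-conditional densities of a binary classification problem; $\widetilde{p}_+,\widetilde{p}_-$ are the marginal densities of the first and second components of pairwise comparison data. *)

From HB Require Import structures.
From mathcomp Require Import all_boot all_order all_algebra.
From mathcomp Require Import all_classical all_reals all_analysis.
Set Implicit Arguments. Unset Strict Implicit. Unset Printing Implicit Defensive.
Import Order.TTheory GRing.Theory Num.Theory.
Local Open Scope ring_scope.

(* Marginal densities of the first / second components of pairwise
   comparison data, with pi_- := 1 - pi_+. *)
Definition ptilde_plus (R : realType) (T : Type) (pip : R) (pp pm : T -> R) (x : T) : R :=
  let pim := 1 - pip in
  pip / (pim ^+ 2 + pip) * pp x + pim ^+ 2 / (pim ^+ 2 + pip) * pm x.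

Definition ptilde_minus (R : realType) (T : Type) (pip : R) (pp pm : T -> R) (x : T) : R :=
  let pim := 1 - pip in
  pip ^+ 2 / (pip ^+ 2 + pim) * pp x + pim / (pip ^+ 2 + pim) * pm x.

Definition is_density (d : measure_display) (R : realType) (T : measurableType d)
  (mu : {measure set T -> \bar R}) (p : T -> R) : Prop :=
  measurable_fun setT p /\ (forall x, 0 <= p x) /\
  (\int[mu]_x (p x)%:E = 1)%E.

From HB Require Import structures.
From mathcomp Require Import all_boot all_order all_algebra.
From mathcomp Require Import all_classical all_reals all_analysis.
From mathcomp Require Import ring.
Import Order.TTheory GRing.Theory Num.Theory.
Local Open Scope ring_scope.

(* Both mixtures share the denominator (1 - pi)^2 + pi = pi^2 - pi + 1, which
   is positive for every real pi; the combinations below cancel it exactly,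
   so the densities are recovered by dividing by pi_+ resp. pi_-. *)

Lemma mixing_denomC (R : comPzRingType) (p : R) :
  p ^+ 2 + (1 - p) = (1 - p) ^+ 2 + p.
Proof. by ring. Qed.

Lemma mixing_denom_gt0 (R : realFieldType) (p : R) : 0 < (1 - p) ^+ 2 + p.
Proof.
have -> : (1 - p) ^+ 2 + p = (p - 2^-1) ^+ 2 + 3 / 4 by field.
by rewrite ltr_wpDl ?sqr_ge0.
Qed.

Section Unmixing.
Variables (R : realType) (T : Type) (pip : R) (pp pm : T -> R) (x : T).

Let denom_neq0 : (1 - pip) ^+ 2 + pip != 0.
Proof. exact/lt0r_neq0/mixing_denom_gt0. Qed.

Lemma ptilde_plusB_minus :
  ptilde_plus pip pp pm x - (1 - pip) * ptilde_minus pip pp pm x = pip * pp x.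
Proof.
by rewrite /ptilde_plus /ptilde_minus /= mixing_denomC; field.
Qed.

Lemma ptilde_minusB_plus :
  ptilde_minus pip pp pm x - pip * ptilde_plus pip pp pm x = (1 - pip) * pm x.
Proof.
by rewrite /ptilde_plus /ptilde_minus /= mixing_denomC; field.
Qed.

End Unmixing.

Theorem lemma1 (d : measure_display) (R : realType) (T : measurableType d)
  (mu : {measure set T -> \bar R}) (pip : R) (pp pm : T -> R) :
  0 < pip < 1 ->
  is_density mu pp -> is_density mu pm ->
  forall x : T,
    pp x = 1 / pip * (ptilde_plus pip pp pm x - (1 - pip) * ptilde_minus pip pp pm x) /\
    pm x = 1 / (1 - pip) * (ptilde_minus pip pp pm x - pip * ptilde_plus pip pp pm x).
Proof.
move=> /andP[pip_gt0 pip_lt1] _ _ x.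
rewrite ptilde_plusB_minus ptilde_minusB_plus !mul1r.
by split; rewrite mulKf // gt_eqF ?subr_gt0.
Qed.
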